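(* Let $L>0$, $N\in\mathbb{N}_+$, $h=L/N$, $\epsilon>0$, $\theta_0>0$, $\tau>0$, $\alpha\in(0,1)$, $\rho_u>0$, $\rho_w>0$, and let $u^n\in\mathcal{C}_{per}$ with $-1<u^n<1$ pointwise. Let $u^{n+1}\in\mathcal{C}_{per}$ (with $-1<u^{n+1}<1$ pointwise) be the solution of the first-order convex splitting scheme, i.e. together with some $w^{n+1}\in\mathcal{C}_{per}$, $$u^{n+1}-u^n=\tau\Delta_hw^{n+1},\qquad w^{n+1}=\log(1+u^{n+1})-\log(1-u^{n+1})-\theta_0u^n-\epsilon^2\Delta_hu^{n+1}.$$ Let $\{u_2^{(k)}\}$ be the sequence generated by Algorithm 1 (described in the context). Then $\lim_{k\to\infty}\|u_2^{(k)}-u^{n+1}\|_2=0$.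
   Context: $\mathcal{C}_{per}$ is the space of real grid functions $\nu=(\nu_{i,j,k})_{i,j,k\in\mathbb{Z}}$ that are $N$-periodic in each index (values at cell centres of a uniform grid of mesh size $h$ on $(0,L)^3$). Inner product $\langle\nu,\xi\rangle=h^2\sum_{i,j,k=1}^N\nu_{i,j,k}\xi_{i,j,k}$, $\|\nu\|_2=\langle\nu,\nu\rangle^{1/2}$. Discrete Laplacian $(\Delta_h\nu)_{i,j,k}=h^{-2}(\nu_{i+1,j,k}+\nu_{i-1,j,k}+\nu_{i,j+1,k}+\nu_{i,j-1,k}+\nu_{i,j,k+1}+\nu_{i,j,k-1}-6\nu_{i,j,k})$. Operations and inequalities are pointwise. Such a solution $(u^{n+1},w^{n+1})$ of the scheme exists and is unique for $-1<u^n<1$. Algorithm 1: set $u_2^{(0)}=u^n$, $w_2^{(0)}=0$, $u_3^{(0)}=0$, $w_3^{(0)}=0$. For $k=0,1,2,\dots$: (i) find $u_1^{(k+1)},w_1^{(k+1)}\in\mathcal{C}_{per}$ solving $-\epsilon^2\Delta_hu_1^{(k+1)}-\alpha w_1^{(k+1)}+u_3^{(k)}+\rho_u(u_1^{(k+1)}-u_2^{(k)})=0$ and $\alpha(-u_1^{(k+1)}+u^n)+\tau\Delta_hw_1^{(k+1)}-w_3^{(k)}-\rho_w(w_1^{(k+1)}-w_2^{(k)})=0$; (ii) find $u_2^{(k+1)},w_2^{(k+1)}\in\mathcal{C}_{per}$ with $-1<u_2^{(k+1)}<1$ solving $\log(1+u_2^{(k+1)})-\log(1-u_2^{(k+1)})-\theta_0u^n-(1-\alpha)w_2^{(k+1)}-u_3^{(k)}-\rho_u(u_1^{(k+1)}-u_2^{(k+1)})=0$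 and $(1-\alpha)(-u_2^{(k+1)}+u^n)+w_3^{(k)}+\rho_w(w_1^{(k+1)}-w_2^{(k+1)})=0$; (iii) set $u_3^{(k+1)}=u_3^{(k)}+\rho_u(u_1^{(k+1)}-u_2^{(k+1)})$, $w_3^{(k+1)}=w_3^{(k)}+\rho_w(w_1^{(k+1)}-w_2^{(k+1)})$. *)

From Stdlib Require Import Reals ZArith Lra.
Open Scope R_scope.

Definition gridfun := Z -> Z -> Z -> R.

Definition Cper (N : nat) (nu : gridfun) : Prop :=
  forall i j k : Z,
    nu (i + Z.of_nat N)%Z j k = nu i j k /\
    nu i (j + Z.of_nat N)%Z k = nu i j k /\
    nu i j (k + Z.of_nat N)%Z = nu i j k.

Definition lap_h (h : R) (nu : gridfun) : gridfun :=
  fun i j k =>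
    / (h * h) * (nu (i + 1)%Z j k + nu (i - 1)%Z j k
                 + nu i (j + 1)%Z k + nu i (j - 1)%Z k
                 + nu i j (k + 1)%Z + nu i j (k - 1)%Z
                 - 6 * nu i j k).

Definition gsum (N : nat) (f : gridfun) : R :=
  sum_f_R0 (fun a =>
    sum_f_R0 (fun b =>
      sum_f_R0 (fun c =>
        f (Z.of_nat (S a)) (Z.of_nat (S b)) (Z.of_nat (S c))) (pred N)) (pred N))
    (pred N).

Definition ginner (N : nat) (h : R) (nu xi : gridfun) : R :=
  h ^ 2 * gsum N (fun i j k => nu i j k * xi i j k).

Definition gnorm2 (N : nat) (h : R) (nu : gridfun) : R :=
  sqrt (ginner N h nu nu).

Definition gsub (nu xi : gridfun) : gridfun := fun i j k => nu i j k - xi i j k.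

From Stdlib Require Import Reals ZArith Lra Lia.
Open Scope R_scope.

(* Algorithm 1 is an ADMM iteration whose fixed point is (u^{n+1}, w^{n+1}) together with
   the corresponding multipliers (u3, w3).  Measured from this fixed point, the weighted
   energy of the errors of (u3, w3, u2, w2) drops at every step by at least
   2 |u2 - u^{n+1}|^2: the Laplacian terms contribute nonnegatively because -Δ_h is
   positive semidefinite on periodic grid functions (summation by parts), and the
   nonlinearity contributes because x |-> ln (1 + x) - ln (1 - x) is strongly monotone.
   Telescoping the energy makes the squared errors of u2 summable. *)

Definition log_ratio (x : R) : R := ln (1 + x) - ln (1 - x).

Lemma ln_sub_ge (s t : R) : 0 < s -> 0 < t -> (s - t) / s <= ln s - ln t.
Proof.
  intros Hs Ht.
  assert (Hts : 0 < t / s) by (apply Rdiv_lt_0_compat; lra).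
  assert (Hln : ln (t / s) <= t / s - 1).
  { pose proof (exp_ineq1_le (ln (t / s))) as Hexp. rewrite exp_ln in Hexp; lra. }
  unfold Rdiv in *.
  rewrite ln_mult, ln_Rinv in Hln by (try apply Rinv_0_lt_compat; lra).
  replace ((s - t) * / s) with (1 - t * / s) by (field; lra).
  lra.
Qed.

Lemma half_le_div (d s : R) : 0 <= d -> 0 < s <= 2 -> d / 2 <= d / s.
Proof.
  intros Hd Hs. unfold Rdiv.
  apply Rmult_le_compat_l; [lra|]. apply Rinv_le_contravar; lra.
Qed.

Lemma log_ratio_sub_ge (x y : R) :
  -1 < y -> y <= x -> x < 1 -> x - y <= log_ratio x - log_ratio y.
Proof.
  intros Hy Hyx Hx. unfold log_ratio.
  pose proof (ln_sub_ge (1 + x) (1 + y) ltac:(lra) ltac:(lra)).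
  pose proof (ln_sub_ge (1 - y) (1 - x) ltac:(lra) ltac:(lra)).
  pose proof (half_le_div (x - y) (1 + x) ltac:(lra) ltac:(lra)).
  pose proof (half_le_div (x - y) (1 - y) ltac:(lra) ltac:(lra)).
  replace (1 + x - (1 + y)) with (x - y) in * by ring.
  replace (1 - y - (1 - x)) with (x - y) in * by ring.
  lra.
Qed.

Lemma log_ratio_strongly_monotone (x y : R) :
  -1 < x < 1 -> -1 < y < 1 -> (x - y) ^ 2 <= (log_ratio x - log_ratio y) * (x - y).
Proof.
  intros Hx Hy. destruct (Rle_dec y x).
  - pose proof (log_ratio_sub_ge x y ltac:(lra) ltac:(lra) ltac:(lra)). nra.
  - pose proof (log_ratio_sub_ge y x ltac:(lra) ltac:(lra) ltac:(lra)). nra.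
Qed.

Definition admm_energy (ru rw l m p q : R) : R :=
  l ^ 2 / ru + m ^ 2 / rw + ru * p ^ 2 + rw * q ^ 2.

Lemma admm_energy_nonneg (ru rw l m p q : R) :
  0 < ru -> 0 < rw -> 0 <= admm_energy ru rw l m p q.
Proof.
  intros Hru Hrw. unfold admm_energy, Rdiv.
  pose proof (Rinv_0_lt_compat _ Hru). pose proof (Rinv_0_lt_compat _ Hrw).
  pose proof (pow2_ge_0 l). pose proof (pow2_ge_0 m).
  pose proof (pow2_ge_0 p). pose proof (pow2_ge_0 q).
  nra.
Qed.

(* (a, b), (p, q), (l, m) are the errors of (u1, w1), (u2, w2), (u3, w3) at the new iterate,
   p0, q0, l0, m0 those at the previous one; La, Lb stand for eps^2 Δ_h a and tau Δ_h b, and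
   f, f0 for the increments of [log_ratio] at the new and previous u2. *)
Lemma admm_energy_identity (alpha ru rw a b p q p0 q0 l0 m0 l m La Lb f f0 : R) :
  ru <> 0 -> rw <> 0 ->
  - La - alpha * b + l0 + ru * (a - p0) = 0 ->
  - alpha * a + Lb - m0 - rw * (b - q0) = 0 ->
  f - (1 - alpha) * q - l0 - ru * (a - p) = 0 ->
  - (1 - alpha) * p + m0 + rw * (b - q) = 0 ->
  l = l0 + ru * (a - p) -> m = m0 + rw * (b - q) ->
  l0 = f0 - (1 - alpha) * q0 -> m0 = (1 - alpha) * p0 ->
  2 * (- La * a) + 2 * (- Lb * b) + 2 * (f * p) + 2 * ((f - f0) * (p - p0))
  = admm_energy ru rw l0 m0 p0 q0 - admm_energy ru rw l m p q
    - admm_energy ru rw (l - l0) (m - m0) (p - p0) (q - q0).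
Proof.
  intros Hru Hrw Hi Hi' Hii Hii' -> -> -> ->.
  assert (Hb : b = q + (1 - alpha) * (p - p0) / rw) by (field_simplify_eq; lra).
  assert (HLa : La = - alpha * b + f0 - (1 - alpha) * q0 + ru * (a - p0)) by lra.
  assert (HLb : Lb = alpha * a + (1 - alpha) * p0 + rw * (b - q0)) by lra.
  assert (Hf : f = (1 - alpha) * q + f0 - (1 - alpha) * q0 + ru * (a - p)) by lra.
  subst La Lb f b. unfold admm_energy. field. auto.
Qed.

Lemma admm_energy_decrease (alpha ru rw a b p q p0 q0 l0 m0 l m La Lb f f0 : R) :
  0 < ru -> 0 < rw ->
  - La - alpha * b + l0 + ru * (a - p0) = 0 ->
  - alpha * a + Lb - m0 - rw * (b - q0) = 0 ->
  f - (1 - alpha) * q - l0 - ru * (a - p) = 0 ->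
  - (1 - alpha) * p + m0 + rw * (b - q) = 0 ->
  l = l0 + ru * (a - p) -> m = m0 + rw * (b - q) ->
  l0 = f0 - (1 - alpha) * q0 -> m0 = (1 - alpha) * p0 ->
  p ^ 2 <= f * p -> 0 <= (f - f0) * (p - p0) ->
  admm_energy ru rw l m p q + 2 * p ^ 2 + 2 * (- La * a) + 2 * (- Lb * b)
  <= admm_energy ru rw l0 m0 p0 q0.
Proof.
  intros Hru Hrw Hi Hi' Hii Hii' Hl Hm Hl0 Hm0 Hstrong Hmono.
  pose proof (admm_energy_identity alpha ru rw a b p q p0 q0 l0 m0 l m La Lb f f0
                ltac:(lra) ltac:(lra) Hi Hi' Hii Hii' Hl Hm Hl0 Hm0).
  pose proof (admm_energy_nonneg ru rw (l - l0) (m - m0) (p - p0) (q - q0) Hru Hrw).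
  lra.
Qed.

Lemma gsum_ext (N : nat) (f g : gridfun) :
  (forall i j k, f i j k = g i j k) -> gsum N f = gsum N g.
Proof.
  intros Hfg. unfold gsum.
  apply sum_eq; intros; apply sum_eq; intros; apply sum_eq; intros. apply Hfg.
Qed.

Lemma gsum_plus (N : nat) (f g : gridfun) :
  gsum N (fun i j k => f i j k + g i j k) = gsum N f + gsum N g.
Proof.
  unfold gsum. rewrite <- sum_plus. apply sum_eq; intros.
  rewrite <- sum_plus. apply sum_eq; intros. apply sum_plus.
Qed.

Lemma sum_f_R0_scal (c : R) (f : nat -> R) (n : nat) :
  sum_f_R0 (fun a => c * f a) n = c * sum_f_R0 f n.
Proof. rewrite scal_sum. apply sum_eq; intros; ring. Qed.

Lemma gsum_scal (N : nat) (c : R) (f : gridfun) :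
  gsum N (fun i j k => c * f i j k) = c * gsum N f.
Proof.
  unfold gsum. rewrite <- sum_f_R0_scal. apply sum_eq; intros.
  rewrite <- sum_f_R0_scal. apply sum_eq; intros. apply sum_f_R0_scal.
Qed.

Lemma gsum_le (N : nat) (f g : gridfun) :
  (forall i j k, f i j k <= g i j k) -> gsum N f <= gsum N g.
Proof.
  intros Hfg. unfold gsum.
  apply sum_Rle; intros; apply sum_Rle; intros; apply sum_Rle; intros. apply Hfg.
Qed.

Lemma gsum_nonneg (N : nat) (f : gridfun) :
  (forall i j k, 0 <= f i j k) -> 0 <= gsum N f.
Proof.
  intros Hf. unfold gsum.
  apply cond_pos_sum; intros; apply cond_pos_sum; intros; apply cond_pos_sum; intros.
  apply Hf.
Qed.

Lemma Cper_binop (N : nat) (op : R -> R -> R) (a b : gridfun) :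
  Cper N a -> Cper N b -> Cper N (fun i j k => op (a i j k) (b i j k)).
Proof.
  intros Ha Hb i j k.
  destruct (Ha i j k) as [-> [-> ->]]. destruct (Hb i j k) as [-> [-> ->]].
  repeat split.
Qed.

Lemma Cper_reindex (N : nat) (a : gridfun) (fi fj fk : Z -> Z) :
  (forall z, fi (z + Z.of_nat N) = fi z + Z.of_nat N)%Z ->
  (forall z, fj (z + Z.of_nat N) = fj z + Z.of_nat N)%Z ->
  (forall z, fk (z + Z.of_nat N) = fk z + Z.of_nat N)%Z ->
  Cper N a -> Cper N (fun i j k => a (fi i) (fj j) (fk k)).
Proof.
  intros Hi Hj Hk Ha i j k. rewrite Hi, Hj, Hk.
  destruct (Ha (fi i) (fj j) (fk k)) as [-> [-> ->]]. repeat split.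
Qed.

Lemma sum_shift_succ (f : Z -> R) (n : nat) :
  sum_f_R0 (fun a => f (Z.of_nat (S a) + 1)%Z) n
  = sum_f_R0 (fun a => f (Z.of_nat (S a))) n - f 1%Z + f (Z.of_nat (S n) + 1)%Z.
Proof.
  induction n as [|n IHn].
  - simpl. ring.
  - rewrite !tech5, IHn.
    replace (Z.of_nat (S n) + 1)%Z with (Z.of_nat (S (S n))) by lia. ring.
Qed.

Lemma sum_shift_periodic (f : Z -> R) (N : nat) :
  (0 < N)%nat -> (forall z, f (z + Z.of_nat N)%Z = f z) ->
  sum_f_R0 (fun a => f (Z.of_nat (S a) + 1)%Z) (pred N)
  = sum_f_R0 (fun a => f (Z.of_nat (S a))) (pred N).
Proof.
  intros HN Hf. rewrite sum_shift_succ.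
  replace (Z.of_nat (S (pred N)) + 1)%Z with (1 + Z.of_nat N)%Z by lia.
  rewrite Hf. ring.
Qed.

Lemma gsum_shift_i (N : nat) (g : gridfun) :
  (0 < N)%nat -> Cper N g -> gsum N (fun i j k => g (i + 1)%Z j k) = gsum N g.
Proof.
  intros HN Hg. unfold gsum.
  apply (sum_shift_periodic (fun z => sum_f_R0 (fun b => sum_f_R0 (fun c =>
           g z (Z.of_nat (S b)) (Z.of_nat (S c))) (pred N)) (pred N))); auto.
  intro z. apply sum_eq; intros; apply sum_eq; intros. apply Hg.
Qed.

Lemma gsum_shift_j (N : nat) (g : gridfun) :
  (0 < N)%nat -> Cper N g -> gsum N (fun i j k => g i (j + 1)%Z k) = gsum N g.
Proof.
  intros HN Hg. unfold gsum. apply sum_eq; intros a _.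
  apply (sum_shift_periodic (fun z => sum_f_R0 (fun c =>
           g (Z.of_nat (S a)) z (Z.of_nat (S c))) (pred N))); auto.
  intro z. apply sum_eq; intros. apply Hg.
Qed.

Lemma gsum_shift_k (N : nat) (g : gridfun) :
  (0 < N)%nat -> Cper N g -> gsum N (fun i j k => g i j (k + 1)%Z) = gsum N g.
Proof.
  intros HN Hg. unfold gsum. apply sum_eq; intros a _. apply sum_eq; intros b _.
  apply (sum_shift_periodic (fun z => g (Z.of_nat (S a)) (Z.of_nat (S b)) z)); auto.
  intro z. apply Hg.
Qed.

Lemma gsum_lap_mul_self (N : nat) (h : R) (a : gridfun) :
  (0 < N)%nat -> Cper N a ->
  gsum N (fun i j k => - lap_h h a i j k * a i j k)
  = / (h * h) * gsum N (fun i j k => (a (i + 1)%Z j k - a i j k) ^ 2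
                                     + (a i (j + 1)%Z k - a i j k) ^ 2
                                     + (a i j (k + 1)%Z - a i j k) ^ 2).
Proof.
  intros HN Ha.
  assert (Hper : forall fi fj fk : Z -> Z,
             (forall z, fi (z + Z.of_nat N) = fi z + Z.of_nat N)%Z ->
             (forall z, fj (z + Z.of_nat N) = fj z + Z.of_nat N)%Z ->
             (forall z, fk (z + Z.of_nat N) = fk z + Z.of_nat N)%Z ->
             Cper N (fun i j k => (a i j k - a (fi i) (fj j) (fk k)) * a i j k)).
  { intros fi fj fk Hi Hj Hk.
    apply (Cper_binop N (fun x y => (x - y) * x)); [exact Ha | now apply Cper_reindex]. }
  transitivity (/ (h * h) * gsum N (fun i j k =>
      (a i j k - a (i + 1)%Z j k) * a i j k + (a i j k - a (i - 1)%Z j k) * a i j k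
    + (a i j k - a i (j + 1)%Z k) * a i j k + (a i j k - a i (j - 1)%Z k) * a i j k
    + (a i j k - a i j (k + 1)%Z) * a i j k + (a i j k - a i j (k - 1)%Z) * a i j k)).
  { rewrite <- gsum_scal. apply gsum_ext; intros. unfold lap_h. ring. }
  rewrite !gsum_plus.
  rewrite <- (gsum_shift_i N (fun i j k => (a i j k - a (i - 1)%Z j k) * a i j k))
    by (auto; apply (Hper (fun z => z - 1)%Z (fun z => z) (fun z => z)); intro; lia).
  rewrite <- (gsum_shift_j N (fun i j k => (a i j k - a i (j - 1)%Z k) * a i j k))
    by (auto; apply (Hper (fun z => z) (fun z => z - 1)%Z (fun z => z)); intro; lia).
  rewrite <- (gsum_shift_k N (fun i j k => (a i j k - a i j (k - 1)%Z) * a i j k))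
    by (auto; apply (Hper (fun z => z) (fun z => z) (fun z => z - 1)%Z); intro; lia).
  rewrite <- !gsum_plus. f_equal. apply gsum_ext; intros i j k.
  rewrite !Z.add_simpl_r. ring.
Qed.

Lemma gsum_lap_mul_self_nonneg (N : nat) (h : R) (a : gridfun) :
  (0 < N)%nat -> Cper N a -> 0 <= gsum N (fun i j k => - lap_h h a i j k * a i j k).
Proof.
  intros HN Ha. rewrite gsum_lap_mul_self by assumption.
  apply Rmult_le_pos.
  - rewrite Rinv_mult. apply Rle_0_sqr.
  - apply gsum_nonneg; intros. repeat apply Rplus_le_le_0_compat; apply pow2_ge_0.
Qed.

Lemma lap_h_sub (h : R) (a b : gridfun) (i j k : Z) :
  lap_h h (gsub a b) i j k = lap_h h a i j k - lap_h h b i j k.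
Proof. unfold lap_h, gsub. ring. Qed.

Lemma Un_cv_0_of_decrements (V C : nat -> R) (c : R) :
  0 < c -> (forall k, 0 <= V k) -> (forall k, 0 <= C k) ->
  (forall k, c * C k <= V k - V (S k)) -> Un_cv C 0.
Proof.
  intros Hc HV HC Hdec.
  assert (Hdecr : Un_decreasing V).
  { intro k. pose proof (Hdec k). pose proof (HC k). nra. }
  assert (Hlb : has_lb V).
  { exists 0. intros x [k ->]. unfold opp_seq. pose proof (HV k). lra. }
  destruct (decreasing_cv V Hdecr Hlb) as [l Hl].
  intros e He.
  destruct (Hl (c * e / 2)) as [K HK]; [nra|].
  exists K. intros n Hn.
  pose proof (HK n Hn) as Hn_close. pose proof (HK (S n) ltac:(lia)) as HSn_close.
  unfold R_dist in *. apply Rabs_def2 in Hn_close. apply Rabs_def2 in HSn_close.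
  pose proof (Hdec n). pose proof (HC n).
  rewrite Rminus_0_r, Rabs_right by lra. nra.
Qed.

Lemma Un_cv_gnorm2_sub (N : nat) (h : R) (a : nat -> gridfun) (b : gridfun) :
  Un_cv (fun m => gsum N (fun i j k => (a m i j k - b i j k) ^ 2)) 0 ->
  Un_cv (fun m => gnorm2 N h (gsub (a m) b)) 0.
Proof.
  intros Hcv.
  assert (Hconst : Un_cv (fun _ => h ^ 2) (h ^ 2)).
  { intros e He. exists O. intros. unfold R_dist. rewrite Rminus_diag, Rabs_R0. exact He. }
  pose proof (CV_mult _ _ _ _ Hconst Hcv) as Hprod. rewrite Rmult_0_r in Hprod.
  rewrite <- sqrt_0.
  apply Un_cv_ext with (fun m => sqrt (h ^ 2 * gsum N (fun i j k => (a m i j k - b i j k) ^ 2))).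
  - intro m. unfold gnorm2, ginner, gsub. f_equal. f_equal. apply gsum_ext; intros. ring.
  - apply continuity_seq; [apply continuity_pt_sqrt; lra | exact Hprod].
Qed.

Section Algorithm1.

Variables (N : nat) (h eps theta0 tau alpha rho_u rho_w : R).
Variables (un us ws : gridfun) (u1 w1 u2 w2 u3 w3 : nat -> gridfun).

Hypotheses (N_pos : (0 < N)%nat) (tau_ge0 : 0 <= tau)
           (rho_u_pos : 0 < rho_u) (rho_w_pos : 0 < rho_w).
Hypotheses (us_per : Cper N us) (ws_per : Cper N ws)
           (us_range : forall i j k, -1 < us i j k < 1).
Hypothesis scheme_u : forall i j k, us i j k - un i j k = tau * lap_h h ws i j k.
Hypothesis scheme_w : forall i j k,
  ws i j k = log_ratio (us i j k) - theta0 * un i j k - eps ^ 2 * lap_h h us i j k.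
Hypotheses (u1_per : forall m, Cper N (u1 (S m))) (w1_per : forall m, Cper N (w1 (S m))).
Hypothesis step_i : forall m i j k,
  - eps ^ 2 * lap_h h (u1 (S m)) i j k - alpha * w1 (S m) i j k
  + u3 m i j k + rho_u * (u1 (S m) i j k - u2 m i j k) = 0 /\
  alpha * (- u1 (S m) i j k + un i j k) + tau * lap_h h (w1 (S m)) i j k
  - w3 m i j k - rho_w * (w1 (S m) i j k - w2 m i j k) = 0.
Hypothesis step_ii : forall m i j k,
  -1 < u2 (S m) i j k < 1 /\
  log_ratio (u2 (S m) i j k) - theta0 * un i j k
  - (1 - alpha) * w2 (S m) i j k - u3 m i j k
  - rho_u * (u1 (S m) i j k - u2 (S m) i j k) = 0 /\
  (1 - alpha) * (- u2 (S m) i j k + un i j k) + w3 m i j k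
  + rho_w * (w1 (S m) i j k - w2 (S m) i j k) = 0.
Hypothesis step_iii : forall m i j k,
  u3 (S m) i j k = u3 m i j k + rho_u * (u1 (S m) i j k - u2 (S m) i j k) /\
  w3 (S m) i j k = w3 m i j k + rho_w * (w1 (S m) i j k - w2 (S m) i j k).

(* The multipliers of Algorithm 1 at its fixed point (us, ws). *)
Definition u3_star : gridfun :=
  fun i j k => log_ratio (us i j k) - theta0 * un i j k - (1 - alpha) * ws i j k.
Definition w3_star : gridfun := fun i j k => (1 - alpha) * (us i j k - un i j k).

Definition lyap_density (m : nat) : gridfun := fun i j k =>
  admm_energy rho_u rho_w (u3 m i j k - u3_star i j k) (w3 m i j k - w3_star i j k)
              (u2 m i j k - us i j k) (w2 m i j k - ws i j k).

(* Only from the first iterate on do steps (ii) and (iii) give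
   u3 = log_ratio u2 - theta0 un - (1 - alpha) w2 and w3 = (1 - alpha) (u2 - un);
   the initial multipliers need not satisfy this, hence the shift by one. *)
Lemma lyap_density_step (m : nat) (i j k : Z) :
  lyap_density (S (S m)) i j k + 2 * (u2 (S (S m)) i j k - us i j k) ^ 2
  + 2 * eps ^ 2 * (- lap_h h (gsub (u1 (S (S m))) us) i j k * gsub (u1 (S (S m))) us i j k)
  + 2 * tau * (- lap_h h (gsub (w1 (S (S m))) ws) i j k * gsub (w1 (S (S m))) ws i j k)
  <= lyap_density (S m) i j k.
Proof.
  destruct (step_i (S m) i j k) as [Ei Ei'].
  destruct (step_ii (S m) i j k) as [Hrange [Eii Eii']].
  destruct (step_ii m i j k) as [Hrange0 [Eii0 Eii0']].
  destruct (step_iii (S m) i j k) as [Eiii Eiii'].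
  destruct (step_iii m i j k) as [Eiii0 Eiii0'].
  pose proof (scheme_u i j k). pose proof (scheme_w i j k).
  unfold lyap_density. rewrite !lap_h_sub. unfold gsub.
  pose proof (log_ratio_strongly_monotone _ _ Hrange (us_range i j k)).
  pose proof (log_ratio_strongly_monotone _ _ Hrange Hrange0).
  pose proof (pow2_ge_0 (u2 (S (S m)) i j k - u2 (S m) i j k)).
  eapply Rle_trans; [apply Req_le | apply (admm_energy_decrease alpha rho_u rho_w
    (u1 (S (S m)) i j k - us i j k) (w1 (S (S m)) i j k - ws i j k)
    (u2 (S (S m)) i j k - us i j k) (w2 (S (S m)) i j k - ws i j k)
    (u2 (S m) i j k - us i j k) (w2 (S m) i j k - ws i j k)
    (u3 (S m) i j k - u3_star i j k) (w3 (S m) i j k - w3_star i j k)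
    (u3 (S (S m)) i j k - u3_star i j k) (w3 (S (S m)) i j k - w3_star i j k)
    (eps ^ 2 * (lap_h h (u1 (S (S m))) i j k - lap_h h us i j k))
    (tau * (lap_h h (w1 (S (S m))) i j k - lap_h h ws i j k))
    (log_ratio (u2 (S (S m)) i j k) - log_ratio (us i j k))
    (log_ratio (u2 (S m) i j k) - log_ratio (us i j k)))].
  all: unfold u3_star, w3_star; try ring; lra.
Qed.

Lemma lyap_decrease (m : nat) :
  gsum N (lyap_density (S (S m)))
  + 2 * gsum N (fun i j k => (u2 (S (S m)) i j k - us i j k) ^ 2)
  <= gsum N (lyap_density (S m)).
Proof.
  pose proof (gsum_le N _ _ (lyap_density_step m)) as Hsum.
  rewrite !gsum_plus, !gsum_scal in Hsum.
  pose proof (gsum_lap_mul_self_nonneg N h (gsub (u1 (S (S m))) us) N_pos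
                (Cper_binop N Rminus _ _ (u1_per (S m)) us_per)).
  pose proof (gsum_lap_mul_self_nonneg N h (gsub (w1 (S (S m))) ws) N_pos
                (Cper_binop N Rminus _ _ (w1_per (S m)) ws_per)).
  pose proof (pow2_ge_0 eps).
  nra.
Qed.

Lemma u2_sq_error_cv : Un_cv (fun m => gsum N (fun i j k => (u2 m i j k - us i j k) ^ 2)) 0.
Proof.
  apply CV_shift with 2%nat.
  apply Un_cv_ext with (fun m => gsum N (fun i j k => (u2 (S (S m)) i j k - us i j k) ^ 2)).
  { intro m. now rewrite Nat.add_comm. }
  apply (Un_cv_0_of_decrements (fun m => gsum N (lyap_density (S m))) _ 2); [lra | | |].
  - intro m. apply gsum_nonneg; intros. apply admm_energy_nonneg; assumption.
  - intro m. apply gsum_nonneg; intros. apply pow2_ge_0.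
  - intro m. pose proof (lyap_decrease m). lra.
Qed.

End Algorithm1.

Theorem theorem4p4
  (L : R) (N : nat) (eps theta0 tau alpha rho_u rho_w : R)
  (un unp1 wnp1 : gridfun)
  (u1 w1 u2 w2 u3 w3 : nat -> gridfun) :
  0 < L -> (0 < N)%nat ->
  0 < eps -> 0 < theta0 -> 0 < tau -> 0 < alpha < 1 ->
  0 < rho_u -> 0 < rho_w ->
  let h := L / INR N in
  (* u^n in C_per with -1 < u^n < 1 *)
  Cper N un -> (forall i j k, -1 < un i j k < 1) ->
  (* (u^{n+1}, w^{n+1}) solves the convex splitting scheme *)
  Cper N unp1 -> Cper N wnp1 -> (forall i j k, -1 < unp1 i j k < 1) ->
  (forall i j k, unp1 i j k - un i j k = tau * lap_h h wnp1 i j k) ->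
  (forall i j k, wnp1 i j k =
      ln (1 + unp1 i j k) - ln (1 - unp1 i j k) - theta0 * un i j k
      - eps ^ 2 * lap_h h unp1 i j k) ->
  (* Algorithm 1: initialisation *)
  u2 0%nat = un -> w2 0%nat = (fun _ _ _ => 0) ->
  u3 0%nat = (fun _ _ _ => 0) -> w3 0%nat = (fun _ _ _ => 0) ->
  (* Algorithm 1: iterates *)
  (forall m, Cper N (u1 (S m)) /\ Cper N (w1 (S m)) /\
             Cper N (u2 (S m)) /\ Cper N (w2 (S m))) ->
  (* step (i) *)
  (forall m i j k,
      - eps ^ 2 * lap_h h (u1 (S m)) i j k - alpha * w1 (S m) i j k
      + u3 m i j k + rho_u * (u1 (S m) i j k - u2 m i j k) = 0 /\
      alpha * (- u1 (S m) i j k + un i j k) + tau * lap_h h (w1 (S m)) i j k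
      - w3 m i j k - rho_w * (w1 (S m) i j k - w2 m i j k) = 0) ->
  (* step (ii) *)
  (forall m i j k,
      -1 < u2 (S m) i j k < 1 /\
      ln (1 + u2 (S m) i j k) - ln (1 - u2 (S m) i j k) - theta0 * un i j k
      - (1 - alpha) * w2 (S m) i j k - u3 m i j k
      - rho_u * (u1 (S m) i j k - u2 (S m) i j k) = 0 /\
      (1 - alpha) * (- u2 (S m) i j k + un i j k) + w3 m i j k
      + rho_w * (w1 (S m) i j k - w2 (S m) i j k) = 0) ->
  (* step (iii) *)
  (forall m i j k,
      u3 (S m) i j k = u3 m i j k + rho_u * (u1 (S m) i j k - u2 (S m) i j k) /\
      w3 (S m) i j k = w3 m i j k + rho_w * (w1 (S m) i j k - w2 (S m) i j k)) ->
  Un_cv (fun m => gnorm2 N h (gsub (u2 m) unp1)) 0.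
Proof.
  intros _ HN _ _ Htau _ Hrho_u Hrho_w h _ _
    Hus_per Hws_per Hus_range Hscheme_u Hscheme_w _ _ _ _
    Hper Hstep_i Hstep_ii Hstep_iii.
  apply Un_cv_gnorm2_sub.
  apply (u2_sq_error_cv N h eps theta0 tau alpha rho_u rho_w un unp1 wnp1 u1 w1 u2 w2 u3 w3);
    auto; try lra; intro m; apply Hper.
Qed.
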